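(* Let $m,n,d$ be positive integers and let $w_1,w_2$ be positive integers with $w_1\mid w_2$ and $w_2\mid m$. Then $$A\left(m\frac{w_1}{w_2},\,n\frac{w_2}{w_1},\,w_1,\,d\right)\ge\left\lceil\frac{\binom{m w_1/w_2}{w_1}^{n w_2/w_1}}{\binom{m}{w_2}^n}A(m,n,w_2,d)\right\rceil.$$ Consequently, for all positive integers $m,n,w,d$ with $w\mid m$, $$\frac{\binom{m}{w}^n}{\binom{mn}{wn}}B(mn,nw,d)\le A(m,n,w,d)\le\frac{\binom{m}{w}^n}{\left(\frac{m}{w}\right)^{nw}}C\left(\frac{m}{w},nw,d\right).$$
   Context: $J(m,w)$ denotes the set of binary vectors of length $m$ and Hamming weight $w$. Elements of $J(m,w)^n$ are identified with $m\times n$ binary matrices all of whose columns have weight $w$, with binary Hamming distance. $A(m,n,w,d)$ is the maximum cardinality of a nonempty subset of $J(m,w)^n$ with pairwise Hamming distances at least $2d$. $B(N,W,d)$ is the maximum cardinality of a nonempty subset of $J(N,W)$ with pairwise Hamming distances at least $2d$. $C(q,n,d)$ is the maximum cardinality of a nonempty subset of $[q]^n$, $[q]=\{0,\dots,q-1\}$, with pairwise Hamming distances (number of differing coordinates) at least $d$. *)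

From HB Require Import structures.
From mathcomp Require Import all_boot all_order all_algebra.
Set Implicit Arguments. Unset Strict Implicit. Unset Printing Implicit Defensive.
Import Order.TTheory GRing.Theory Num.Theory.

(* Elements of J(m,w)^n are m x n binary matrices whose columns all have weight w.
   Matrix entry M i j : i = row in 'I_m, j = column in 'I_n. *)

Definition col_weight (m n : nat) (M : 'M[bool]_(m, n)) (j : 'I_n) : nat :=
  #|[set i : 'I_m | M i j]|.

Definition mx_dist (m n : nat) (M N : 'M[bool]_(m, n)) : nat :=
  #|[set p : 'I_m * 'I_n | M p.1 p.2 != N p.1 p.2]|.

Definition validA (m n w d : nat) (S : {set 'M[bool]_(m, n)}) : bool :=
  [&& S != set0,
      [forall M in S, forall j : 'I_n, col_weight M j == w] &
      [forall M in S, forall N in S, (M != N) ==> (2 * d <= mx_dist M N)]].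

Definition A (m n w d : nat) : nat :=
  \max_(S : {set 'M[bool]_(m, n)} | validA w d S) #|S|.

Definition vweight (N : nat) (x : {ffun 'I_N -> bool}) : nat := #|[set i | x i]|.

Definition bdist (N : nat) (x y : {ffun 'I_N -> bool}) : nat :=
  #|[set i | x i != y i]|.

Definition validB (N W d : nat) (S : {set {ffun 'I_N -> bool}}) : bool :=
  [&& S != set0,
      [forall x in S, vweight x == W] &
      [forall x in S, forall y in S, (x != y) ==> (2 * d <= bdist x y)]].

Definition B (N W d : nat) : nat :=
  \max_(S : {set {ffun 'I_N -> bool}} | validB W d S) #|S|.

Definition qdist (q n : nat) (x y : {ffun 'I_n -> 'I_q}) : nat :=
  #|[set i | x i != y i]|.

Definition validC (q n d : nat) (S : {set {ffun 'I_n -> 'I_q}}) : bool :=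
  (S != set0) && [forall x in S, forall y in S, (x != y) ==> (d <= qdist x y)].

Definition C (q n d : nat) : nat :=
  \max_(S : {set {ffun 'I_n -> 'I_q}} | validC d S) #|S|.

From mathcomp Require Import all_boot all_algebra all_fingroup.
Import GRing.Theory Num.Theory.
Set Implicit Arguments. Unset Strict Implicit. Unset Printing Implicit Defensive.

(* Write m = k m' and w2 = k w1, and read each column of a word of
   J(m, w2)^n as k stacked blocks of m' rows.  If every block has weight w1,
   laying the blocks side by side gives a word of J(m', w1)^(n k), and this
   reshaping preserves distances.  Permuting the rows inside each column also
   preserves distances, and these permutations act transitively on J(m, w2)^n;
   averaging over the group, some permuted copy of an optimal code has a
   fraction at least C(m', w1)^(n k) / C(m, w2)^n of its words block-balanced.
   The two consequences are the cases of one column cut into n blocks (a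
   one-column code is a constant-weight code) and of blocks of weight one
   (a matrix with weight-one columns is a q-ary word, at half the distance). *)

Lemma card_set_sum (T : finType) (P : pred T) : #|[set x | P x]| = \sum_x P x.
Proof. by rewrite -sum1dep_card big_mkcond; apply: eq_bigr => x _; case: (P x). Qed.

Lemma card_pairs_suml (I J : finType) (F : I -> J -> bool) :
  #|[set p : I * J | F p.1 p.2]| = \sum_i #|[set j | F i j]|.
Proof.
under [RHS]eq_bigr do rewrite -sum1dep_card.
by rewrite pair_big_dep sum1dep_card.
Qed.

Lemma card_pairs_sumr (I J : finType) (F : I -> J -> bool) :
  #|[set p : I * J | F p.1 p.2]| = \sum_j #|[set i | F i j]|.
Proof.
rewrite card_pairs_suml; under eq_bigr do rewrite -sum1dep_card.
rewrite (exchange_big_dep predT) //=.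
by apply: eq_bigr => j _; rewrite sum1dep_card.
Qed.

Lemma exists_ge_average (I : finType) (F : I -> nat) c :
  0 < #|I| -> c * #|I| <= \sum_i F i -> exists i, c <= F i.
Proof.
move=> I_gt0 avg; have [i Fi] := bigop.eq_bigmax F I_gt0.
exists i; rewrite -(leq_pmul2r I_gt0) (leq_trans avg) // -Fi mulnC -sum_nat_const.
by apply: leq_sum => j _; apply: bigop.leq_bigmax.
Qed.

Lemma perm_imset_of_card (T : finType) (A B : {set T}) :
  #|A| = #|B| -> exists s : {perm T}, s @: A = B.
Proof.
move=> eqAB; pose e (C : {set T}) := enum C ++ enum (~: C).
have e_all C x : x \in e C by rewrite mem_cat !mem_enum inE orbN.
have size_e C : size (e C) = #|T| by rewrite size_cat -!cardE cardsC.
have uniq_e C : uniq (e C).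
  rewrite cat_uniq !enum_uniq andbT /=; apply/hasPn => x.
  by rewrite !mem_enum inE.
pose f x := nth x (e B) (index x (e A)).
have index_lt x : index x (e A) < #|T| by rewrite -(size_e A) index_mem.
have f_inj : injective f.
  move=> x y; rewrite /f (set_nth_default y) ?size_e //.
  move/eqP; rewrite nth_uniq ?size_e // => /eqP eq_index.
  by rewrite -[x](nth_index x (e_all A x)) eq_index nth_index.
exists (perm f_inj); apply/eqP.
rewrite eqEcard (card_imset _ perm_inj) eqAB leqnn andbT.
apply/subsetP => _ /imsetP[x xA ->]; rewrite permE /f.
have lt_x : index x (e A) < size (enum B).
  by rewrite /e index_cat mem_enum xA -cardE -eqAB cardE index_mem mem_enum.
by rewrite nth_cat lt_x -mem_enum mem_nth.
Qed.

Section TransitiveAveraging.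

Variables (gT : finGroupType) (T : finType) (to : {action gT &-> T}) (J : {set T}).
Hypothesis transJ : [transitive [set: gT], on J | to].

Lemma card_act_fibre x y :
  x \in J -> y \in J -> #|[set a | to x a == y]| = #|'C[x | to]%g|.
Proof.
move=> xJ yJ; have [b _ ->] := atransP2 transJ xJ yJ.
rewrite -[RHS](card_rcoset _ b) -(setTI 'C[x | to]%g) -amove_act ?inE ?subsetT //.
by apply: eq_card => a; rewrite !inE.
Qed.

Lemma card_transitive_stab x : x \in J -> #|J| * #|'C[x | to]%g| = #|gT|.
Proof.
move=> xJ; rewrite -(atransP transJ _ xJ) -cardsT.
by rewrite -(card_orbit_stab to [set: gT]%G x) setTI.
Qed.

Lemma card_act_preim x (Q : {set T}) :
  x \in J -> Q \subset J -> #|[set a | to x a \in Q]| = #|Q| * #|'C[x | to]%g|.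
Proof.
move=> xJ sQJ; rewrite -sum1dep_card (partition_big (to x) (mem Q)) //=.
rewrite -sum_nat_const; apply: eq_bigr => y yQ.
rewrite -(card_act_fibre xJ (subsetP sQJ y yQ)) -sum1dep_card.
by apply: eq_bigl => a; case: eqP => [->|_]; rewrite ?yQ ?andbF.
Qed.

Lemma transitive_averaging (S P : {set T}) :
  S \subset J -> P \subset J ->
  exists a, #|S| * #|P| <= #|[set x in S | to x a \in P]| * #|J|.
Proof.
move=> sSJ sPJ; apply: exists_ge_average; first by apply/card_gt0P; exists 1%g.
rewrite -big_distrl (eq_bigr (fun a => \sum_x ((x \in S) && (to x a \in P)))); last first.
  by move=> a _; rewrite card_set_sum.
rewrite exchange_big (bigID (mem S)) /= [X in _ + X]big1 ?addn0 => [|x /negbTE xS]; last first.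
  by rewrite big1 // => a _; rewrite xS.
rewrite big_distrl -mulnA -sum_nat_const; apply/eq_leq/eq_bigr => x xS /=.
rewrite xS -(card_set_sum (fun a => to x a \in P)) card_act_preim ?(subsetP sSJ) //.
by rewrite -mulnA [_ * #|J|]mulnC card_transitive_stab ?(subsetP sSJ).
Qed.

End TransitiveAveraging.

Definition pair_ord a b (p : 'I_a * 'I_b) : 'I_(a * b) :=
  cast_ord (mxvec_cast a b) (enum_rank p).

Definition unpair_ord a b (z : 'I_(a * b)) : 'I_a * 'I_b :=
  enum_val (cast_ord (esym (mxvec_cast a b)) z).

Lemma pair_ordK a b : cancel (@pair_ord a b) (@unpair_ord a b).
Proof. by move=> p; rewrite /unpair_ord cast_ordK enum_rankK. Qed.

Lemma unpair_ordK a b : cancel (@unpair_ord a b) (@pair_ord a b).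
Proof. by move=> z; rewrite /pair_ord enum_valK cast_ordKV. Qed.

Lemma mx_dist_cols m n (M N : 'M[bool]_(m, n)) :
  mx_dist M N = \sum_j #|[set i | M i j != N i j]|.
Proof. exact: card_pairs_sumr. Qed.

Definition mx_reindex a b a' b' (h : 'I_a' * 'I_b' -> 'I_a * 'I_b)
    (M : 'M[bool]_(a, b)) : 'M[bool]_(a', b') :=
  (\matrix_(i, j) M (h (i, j)).1 (h (i, j)).2)%R.

Section Reindex.

Variables (a b a' b' : nat).
Implicit Types (h : 'I_a' * 'I_b' -> 'I_a * 'I_b) (M N : 'M[bool]_(a, b)).

Lemma mx_reindexK h (h' : 'I_a * 'I_b -> 'I_a' * 'I_b') :
  cancel h h' -> cancel (mx_reindex h') (mx_reindex h).
Proof. by move=> hK M; apply/matrixP => i j; rewrite !mxE -surjective_pairing hK. Qed.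

Lemma mx_dist_reindex h M N :
  bijective h -> mx_dist (mx_reindex h M) (mx_reindex h N) = mx_dist M N.
Proof.
move=> h_bij; rewrite /mx_dist -(on_card_preimset (onW_bij _ h_bij)).
by apply: eq_card => -[i j]; rewrite !inE !mxE.
Qed.

End Reindex.

Definition const_weight_mx m n w : {set 'M[bool]_(m, n)} :=
  [set M | [forall j, col_weight M j == w]].

Lemma card_const_weight_mx m n w : #|const_weight_mx m n w| = 'C(m, w) ^ n.
Proof.
pose cols (M : 'M[bool]_(m, n)) := [ffun j => [set i | M i j]].
pose uncols (F : {ffun 'I_n -> {set 'I_m}}) := (\matrix_(i, j) (i \in F j))%R.
have colsK : cancel cols uncols by move=> M; apply/matrixP => i j; rewrite mxE ffunE inE.
have uncolsK : cancel uncols cols.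
  by move=> F; apply/ffunP => j; apply/setP => i; rewrite ffunE inE mxE.
rewrite -[m in 'C(m, _)]card_ord -card_draws -[n in _ ^ n]card_ord -card_ffun_on.
rewrite -(on_card_preimset (onW_bij _ (Bijective colsK uncolsK))).
apply: eq_card => M; rewrite !inE; apply/forallP/ffun_onP => wM j.
  by rewrite ffunE inE wM.
by have := wM j; rewrite ffunE inE.
Qed.

Section ColumnwisePermutation.

Variables (K n : nat).
Implicit Types (M N : 'M[bool]_(K, n)) (g : {dffun 'I_n -> {perm 'I_K}}).

(* [g j] moves the rows of column [j]; the inverse makes this a right action. *)
Definition colwise_perm M g : 'M[bool]_(K, n) :=
  mx_reindex (fun p => ((g p.2)^-1%g p.1, p.2)) M.

Lemma colwise_perm1 : colwise_perm^~ 1%g =1 id.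
Proof. by move=> M; apply/matrixP => i j; rewrite mxE /= ffunE invg1 perm1. Qed.

Lemma colwise_permM M : act_morph colwise_perm M.
Proof. by move=> g h; apply/matrixP => i j; rewrite !mxE /= !ffunE invMg permM. Qed.

Definition colwise_perm_action := TotalAction colwise_perm1 colwise_permM.

Lemma mx_dist_colwise_perm M N g :
  mx_dist (colwise_perm M g) (colwise_perm N g) = mx_dist M N.
Proof.
apply: mx_dist_reindex.
by exists (fun p => (g p.2 p.1, p.2)); case=> i j /=; rewrite ?permKV ?permK.
Qed.

Lemma col_weight_colwise_perm M g j : col_weight (colwise_perm M g) j = col_weight M j.
Proof.
rewrite /col_weight -[RHS](card_preimset _ (@perm_inj _ (g j)^-1%g)).
by apply: eq_card => i; rewrite !inE mxE.
Qed.

Lemma colwise_perm_transitive w :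
  const_weight_mx K n w != set0 ->
  [transitive [set: {dffun 'I_n -> {perm 'I_K}}], on const_weight_mx K n w
     | colwise_perm_action].
Proof.
case/set0Pn => M0 M0w; apply/imsetP; exists M0 => //; apply/setP => N.
apply/idP/idP => [Nw | /orbitP[g _ <-]]; last first.
  move: M0w; rewrite !inE => /forallP wM0; apply/forallP => j.
  by rewrite /= col_weight_colwise_perm wM0.
have eq_w j : col_weight M0 j = col_weight N j.
  by move: M0w Nw; rewrite !inE => /forallP/(_ j)/eqP -> /forallP/(_ j)/eqP ->.
have /fin_all_exists[s sM0N] := fun j => perm_imset_of_card (eq_w j).
apply/orbitP; exists [ffun j => s j]; rewrite ?inE //.
apply/matrixP => i j; rewrite mxE /= ffunE.
by move/setP: (sM0N j) => /(_ i); rewrite -preim_permV !inE.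
Qed.

End ColumnwisePermutation.

Section Unstack.

Variables (k m n : nat).

(* Row [pair_ord (b, r)] of [M : 'M_(k * m, n)] is row [r] of block [b]; the
   blocks of column [j] become the columns [pair_ord (j, b)] of [unstack M]. *)
Definition unstack_cell (p : 'I_m * 'I_(n * k)) : 'I_(k * m) * 'I_n :=
  let: (j, b) := unpair_ord p.2 in (pair_ord (b, p.1), j).

Definition restack_cell (q : 'I_(k * m) * 'I_n) : 'I_m * 'I_(n * k) :=
  let: (b, r) := unpair_ord q.1 in (r, pair_ord (q.2, b)).

Lemma unstack_cellK : cancel unstack_cell restack_cell.
Proof.
case=> r c; rewrite /unstack_cell /restack_cell /=.
by case E: (unpair_ord c) => [j b]; rewrite pair_ordK -E unpair_ordK.
Qed.

Lemma restack_cellK : cancel restack_cell unstack_cell.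
Proof.
case=> i j; rewrite /unstack_cell /restack_cell /=.
by case E: (unpair_ord i) => [b r]; rewrite pair_ordK -E unpair_ordK.
Qed.

Definition unstack : 'M[bool]_(k * m, n) -> 'M[bool]_(m, n * k) := mx_reindex unstack_cell.

Lemma unstack_bij : bijective unstack.
Proof. exact: (Bijective (mx_reindexK restack_cellK) (mx_reindexK unstack_cellK)). Qed.

Lemma mx_dist_unstack M N : mx_dist (unstack M) (unstack N) = mx_dist M N.
Proof.
by apply: mx_dist_reindex; exists restack_cell; [apply: unstack_cellK | apply: restack_cellK].
Qed.

Lemma col_weight_unstack M j b :
  col_weight (unstack M) (pair_ord (j, b)) = #|[set r | M (pair_ord (b, r)) j]|.
Proof. by apply: eq_card => r; rewrite !inE mxE /unstack_cell /= pair_ordK. Qed.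

Lemma col_weight_blocks M j : col_weight M j = \sum_b col_weight (unstack M) (pair_ord (j, b)).
Proof.
have pair_bij := Bijective (@pair_ordK k m) (@unpair_ordK k m).
rewrite /col_weight -(on_card_preimset (onW_bij _ pair_bij)).
rewrite (eq_card (B := [set p : 'I_k * 'I_m | M (pair_ord (p.1, p.2)) j])); last first.
  by case=> b r; rewrite !inE.
rewrite (card_pairs_suml (fun b r => M (pair_ord (b, r)) j)).
by apply: eq_bigr => b _; rewrite -col_weight_unstack.
Qed.

End Unstack.

Arguments unstack {k m n}.

Lemma validAP m n w d (S : {set 'M[bool]_(m, n)}) :
  reflect [/\ S != set0, S \subset const_weight_mx m n w
            & {in S &, forall M N, M != N -> 2 * d <= mx_dist M N}]
          (validA w d S).
Proof.
apply: (iffP and3P) => [[S0 /forall_inP wS /forall_inP dS] | [S0 sSw dS]].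
  split=> // [|M N MS NS]; first by apply/subsetP => M MS; rewrite inE wS.
  exact/implyP/(forall_inP (dS M MS)).
split=> //; apply/forall_inP => M MS.
  by have := subsetP sSw M MS; rewrite inE.
by apply/forall_inP => N NS; apply/implyP; apply: dS.
Qed.

Lemma card_code_le_A m n w d (S : {set 'M[bool]_(m, n)}) :
  S \subset const_weight_mx m n w ->
  {in S &, forall M N, M != N -> 2 * d <= mx_dist M N} -> #|S| <= A m n w d.
Proof.
have [-> | S0] := eqVneq S set0; first by rewrite cards0.
move=> sSw dS; apply: (@bigop.leq_bigmax_cond _ (validA w d) (fun S => #|S|)).
exact/validAP.
Qed.

Lemma unstack_preim_const_weight k m n w :
  unstack @^-1: const_weight_mx m (n * k) w \subset const_weight_mx (k * m) n (k * w).
Proof.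
apply/subsetP => M; rewrite !inE => /forallP wM; apply/forallP => j.
rewrite col_weight_blocks (eq_bigr (fun=> w)) ?sum_nat_const ?card_ord //.
by move=> b _; apply/eqP.
Qed.

Lemma card_code_unstack_le m k n w d (S : {set 'M[bool]_(k * m, n)}) :
  validA (k * w) d S ->
  'C(m, w) ^ (n * k) * #|S| <= A m (n * k) w d * 'C(k * m, k * w) ^ n.
Proof.
case/validAP => S0 sSJ dS.
set J := const_weight_mx (k * m) n (k * w).
set P := unstack @^-1: const_weight_mx m (n * k) w.
have cardP : #|P| = 'C(m, w) ^ (n * k).
  by rewrite on_card_preimset ?card_const_weight_mx //; apply/onW_bij/unstack_bij.
have J0 : J != set0 by apply: contraNneq S0 => J0; rewrite -subset0 -J0.
have [g Sg] := transitive_averaging (colwise_perm_transitive J0) sSJ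
                 (unstack_preim_const_weight k m n w).
set S' := [set x in S | _] in Sg.
pose f x := unstack (colwise_perm x g).
have f_inj : injective f.
  apply: inj_comp (act_inj (colwise_perm_action _ _) g).
  by case: (unstack_bij k m n) => h /can_inj.
rewrite mulnC -cardP -card_const_weight_mx (leq_trans Sg) // leq_mul2r.
apply/orP; right; rewrite -(card_imset _ f_inj); apply: card_code_le_A.
  apply/subsetP => M /imsetP[x xS' ->].
  by move: xS'; rewrite inE => /andP[_]; rewrite inE.
move=> M N /imsetP[x xS' ->] /imsetP[y yS' ->] fxy.
move: xS' yS'; rewrite !inE => /andP[xS _] /andP[yS _].
rewrite mx_dist_unstack mx_dist_colwise_perm dS //.
by apply: contraNneq fxy => ->.
Qed.

Lemma A_unstack_bound m k n w d :
  'C(m, w) ^ (n * k) * A (k * m) n (k * w) d <= A m (n * k) w d * 'C(k * m, k * w) ^ n.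
Proof.
apply: (big_ind (fun x => _ * x <= _)) => [|x y|S /card_code_unstack_le] //.
  by rewrite muln0.
by rewrite maxnMr geq_max => -> ->.
Qed.

Lemma B_le_A1 N W d : B N W d <= A N 1 W d.
Proof.
apply/bigop.bigmax_leqP => S /and3P[_ /forall_inP wS /forall_inP dS].
pose col (v : {ffun 'I_N -> bool}) : 'M[bool]_(N, 1) := (\matrix_(i, j) v i)%R.
have col_inj : injective col.
  by move=> u v /matrixP eq_uv; apply/ffunP => i; have := eq_uv i ord0; rewrite !mxE.
rewrite -(card_imset _ col_inj); apply: card_code_le_A.
  apply/subsetP => _ /imsetP[v vS ->]; rewrite inE; apply/forallP => j.
  by rewrite -(eqP (wS v vS)); apply/eqP/eq_card => i; rewrite !inE mxE.
move=> _ _ /imsetP[u uS ->] /imsetP[v vS ->] neq_uv.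
rewrite mx_dist_cols big_ord1 (eq_card (B := [set i | u i != v i])); last first.
  by move=> i; rewrite !inE !mxE.
by have /forall_inP/(_ v vS)/implyP := dS u uS; apply; apply: contraNneq neq_uv => ->.
Qed.

Lemma card_indicator_neq (T : finType) (a b : T) :
  #|[set i | (i == a) != (i == b)]| = 2 * (a != b).
Proof.
have [<- | neq_ab] := eqVneq a b.
  by apply: eq_card0 => i; rewrite !inE eqxx.
transitivity #|[set a; b]|; last by rewrite cards2 neq_ab.
apply: eq_card => i; rewrite !inE.
by have [-> | _] := eqVneq i a; rewrite ?(negbTE neq_ab) //; case: (i == b).
Qed.

Definition decode_one_hot q N (i0 : 'I_q) (M : 'M[bool]_(q, N)) : {ffun 'I_N -> 'I_q} :=
  [ffun j => odflt i0 [pick i | M i j]].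

Lemma one_hotE q N i0 (M : 'M[bool]_(q, N)) j :
  M \in const_weight_mx q N 1 -> M^~ j =1 pred1 (decode_one_hot i0 M j).
Proof.
rewrite inE => /forallP/(_ j)/cards1P[x Mx] i.
have Mi i' : M i' j = (i' == x) by move/setP: Mx => /(_ i'); rewrite !inE.
by rewrite ffunE; case: pickP => [y|/(_ x)]; rewrite !Mi ?eqxx // => /eqP->.
Qed.

Lemma mx_dist_one_hot q N i0 (M M' : 'M[bool]_(q, N)) :
  M \in const_weight_mx q N 1 -> M' \in const_weight_mx q N 1 ->
  mx_dist M M' = 2 * qdist (decode_one_hot i0 M) (decode_one_hot i0 M').
Proof.
move=> M1 M'1; rewrite mx_dist_cols /qdist card_set_sum big_distrr.
apply: eq_bigr => j _; apply: eq_trans (card_indicator_neq _ _).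
by apply: eq_card => i; rewrite !inE (one_hotE i0 j M1) (one_hotE i0 j M'1).
Qed.

Lemma A_weight1_le_C q N d : 0 < q -> A q N 1 d <= C q N d.
Proof.
move=> q_gt0; pose i0 := Ordinal q_gt0; pose dec := @decode_one_hot q N i0.
apply/bigop.bigmax_leqP => S /validAP[S0 sS1 dS].
have dec_inj : {in S &, injective dec}.
  move=> M M' /(subsetP sS1) M1 /(subsetP sS1) M'1 eq_dec; apply/matrixP => i j.
  by rewrite (one_hotE i0 j M1) (one_hotE i0 j M'1) -/dec eq_dec.
rewrite -(card_in_imset dec_inj).
apply: (@bigop.leq_bigmax_cond _ (validC d) (fun S => #|S|)); apply/andP; split.
  by case/set0Pn: S0 => M MS; apply/set0Pn; exists (dec M); apply: imset_f.
apply/forall_inP => _ /imsetP[M MS ->]; apply/forall_inP => _ /imsetP[M' M'S ->].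
apply/implyP => neq; rewrite -(leq_pmul2l (isT : 0 < 2)) -mx_dist_one_hot ?(subsetP sS1) //.
by rewrite dS //; apply: contraNneq neq => ->.
Qed.

Local Open Scope ring_scope.

Lemma ler_natdivM (a b c z : nat) :
  (0 < b)%N -> (a * c <= z * b)%N -> a%:R / b%:R * c%:R <= z%:R :> rat.
Proof. by move=> b_gt0 le_acz; rewrite mulrAC ler_pdivrMr ?ltr0n // -!natrM ler_nat. Qed.

Lemma ger_natdivM (a b c z : nat) :
  (0 < b)%N -> (z * b <= a * c)%N -> z%:R <= a%:R / b%:R * c%:R :> rat.
Proof. by move=> b_gt0 le_zac; rewrite mulrAC ler_pdivlMr ?ltr0n // -!natrM ler_nat. Qed.

Theorem proposition11 :
  (forall m n d w1 w2 : nat,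
     (0 < m)%N -> (0 < n)%N -> (0 < d)%N -> (0 < w1)%N -> (0 < w2)%N ->
     (w1 %| w2)%N -> (w2 %| m)%N ->
     Num.ceil (('C(m * w1 %/ w2, w1) ^ (n * w2 %/ w1))%N%:R
                / ('C(m, w2) ^ n)%N%:R * (A m n w2 d)%:R : rat)
       <= (A (m * w1 %/ w2) (n * w2 %/ w1) w1 d)%:Z)
  /\
  (forall m n w d : nat,
     (0 < m)%N -> (0 < n)%N -> (0 < w)%N -> (0 < d)%N -> (w %| m)%N ->
     ('C(m, w) ^ n)%N%:R / ('C(m * n, w * n))%:R * (B (m * n) (n * w) d)%:R
       <= (A m n w d)%:R :> rat
     /\ (A m n w d)%:R
       <= ('C(m, w) ^ n)%N%:R / ((m %/ w) ^ (n * w))%N%:R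
            * (C (m %/ w) (n * w) d)%:R :> rat).
Proof.
split=> [m n d w1 w2 m_gt0 _ _ w1_gt0 w2_gt0 /dvdnP[k def_w2] /dvdnP[c def_m] |
         m n w d m_gt0 _ w_gt0 _ w_dvd_m].
  subst m w2; have c_gt0 : (0 < c)%N by move: m_gt0; rewrite muln_gt0 => /andP[].
  rewrite ceil_le_int -pmulrn ler_natdivM ?expn_gt0 ?bin_gt0 ?leq_pmull //.
  rewrite mulnAC mulnK // mulnA mulnK // mulnCA.
  exact: A_unstack_bound.
have le_wm := dvdn_leq m_gt0 w_dvd_m.
split.
  rewrite [(w * n)%N]mulnC [(m * n)%N]mulnC ler_natdivM ?bin_gt0 ?leq_mul2l ?le_wm ?orbT //.
  have := A_unstack_bound m n 1 w d; rewrite mul1n !expn1.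
  by apply: leq_trans; rewrite leq_mul2l B_le_A1 orbT.
have q_gt0 : (0 < m %/ w)%N by rewrite divn_gt0.
rewrite ger_natdivM ?expn_gt0 ?q_gt0 //.
have := A_unstack_bound (m %/ w) w n 1 d; rewrite bin1 muln1 [(w * _)%N]mulnC divnK //.
move=> bound; rewrite mulnC; apply: leq_trans bound _.
by rewrite mulnC leq_mul2l A_weight1_le_C ?orbT.
Qed.
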